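(* Let $P\subseteq\mathbb{R}^7$ be an associative $3$-plane. Then $\Theta(P) = \Lambda^2(P)\oplus(P\lrcorner\varphi)$, i.e. $\Theta(P) = \Lambda^2(P) + (P\lrcorner\varphi)$ and $\Lambda^2(P)\cap(P\lrcorner\varphi) = \{0\}$; this direct sum is not orthogonal.
   Context: Equip $\mathbb{R}^7$ with its standard inner product, orientation and basis $e_1,\dots,e_7$. Let $\varphi = e_{123} - e_{167} - e_{527} - e_{563} - e_{415} - e_{426} - e_{437}$ ($e_{ijk} = e_i\wedge e_j\wedge e_k$), $\psi = \star\varphi = e_{4567} - e_{4523} - e_{4163} - e_{4127} - e_{2637} - e_{1537} - e_{1526}$, and define $\times$ by $\langle u \times v, w \rangle = \varphi(u,v,w)$. A $3$-dimensional subspace is associative if closed under $\times$. For $u,v$: $u\wedge v$ is the 2-form $(a,b)\mapsto \langle u,a\rangle\langle v,b\rangle - \langle u,b\rangle\langle v,a\rangle$; $u\lrcorner\varphi$ is the 2-form $(a,b)\mapsto \varphi(u,a,b)$; $\Psi_{uv}$ is the 2-form $(a,b)\mapsto\psi(u,v,a,b)$. $P\lrcorner\varphi = \{u\lrcorner\varphi : u\in P\}$, $\Lambda^2(P) = \mathrm{Span}\{u\wedge v: u,v\in P\}$, $\Psi(P) = \mathrm{Span}\{\Psi_{uv} : u,v\in P\}$, and $\Theta(P) = \Lambda^2(P)\oplus\Psi(P)$. The inner product on $\Lambda^2$ is $\langle X,Y\rangle = \sum_{i,j}X(e_i,e_j)Y(e_i,e_j)$. *)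

From HB Require Import structures.
From mathcomp Require Import all_boot all_order all_algebra.
From mathcomp Require Import reals.
Set Implicit Arguments. Unset Strict Implicit. Unset Printing Implicit Defensive.
Import Order.TTheory GRing.Theory Num.Theory.
Local Open Scope ring_scope.

Section G2.
Variable R : realType.

Definition vec7 := 'rV[R]_7.

(* 1-based index e_n  ~  ordinal n-1 *)
Definition ix (n : nat) : 'I_7 := inord n.-1.

Definition evec (n : nat) : vec7 := delta_mx 0 (ix n).

Definition eb (k : 'I_7) : vec7 := delta_mx 0 k.

Definition e3 (i j k : nat) (u v w : vec7) : R :=
  \det (\matrix_(r < 3, c < 3) (nth 0 [:: u; v; w] r) 0 (ix (nth 0%N [:: i; j; k] c))).

Definition e4 (i j k l : nat) (u v w x : vec7) : R :=
  \det (\matrix_(r < 4, c < 4)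
          (nth 0 [:: u; v; w; x] r) 0 (ix (nth 0%N [:: i; j; k; l] c))).

Definition phi (u v w : vec7) : R :=
  e3 1 2 3 u v w - e3 1 6 7 u v w - e3 5 2 7 u v w - e3 5 6 3 u v w
  - e3 4 1 5 u v w - e3 4 2 6 u v w - e3 4 3 7 u v w.

Definition psi (u v w x : vec7) : R :=
  e4 4 5 6 7 u v w x - e4 4 5 2 3 u v w x - e4 4 1 6 3 u v w x
  - e4 4 1 2 7 u v w x - e4 2 6 3 7 u v w x - e4 1 5 3 7 u v w x
  - e4 1 5 2 6 u v w x.

Definition dot (u v : vec7) : R := \sum_(i < 7) u 0 i * v 0 i.

(* cross product: <u x v, w> = phi(u,v,w); its k-th coordinate is
   <u x v, e_k> = phi(u, v, e_k) *)
Definition cross (u v : vec7) : vec7 := \row_(k < 7) phi u v (eb k).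

Definition is_associative (P : {vspace vec7}) : Prop :=
  \dim P = 3%N /\ (forall u v, u \in P -> v \in P -> cross u v \in P).

(* 2-forms on R^7 are represented by their matrix of values X(e_i, e_j)
   (a bilinear form is determined by these values). *)
Definition form2 := 'M[R]_7.

Definition wedge (u v : vec7) : form2 :=
  \matrix_(i < 7, j < 7) (dot u (eb i) * dot v (eb j) - dot u (eb j) * dot v (eb i)).

Definition contr (u : vec7) : form2 :=
  \matrix_(i < 7, j < 7) phi u (eb i) (eb j).

Definition Psi (u v : vec7) : form2 :=
  \matrix_(i < 7, j < 7) psi u v (eb i) (eb j).

Definition ip2 (X Y : form2) : R := \sum_(i < 7) \sum_(j < 7) X i j * Y i j.

Definition in_span (G : form2 -> Prop) (X : form2) : Prop :=
  exists (n : nat) (c : 'I_n -> R) (g : 'I_n -> form2),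
    (forall i, G (g i)) /\ X = \sum_(i < n) c i *: g i.

Definition Lambda2 (P : {vspace vec7}) (X : form2) : Prop :=
  in_span (fun Y => exists u v, [/\ u \in P, v \in P & Y = wedge u v]) X.

Definition PsiP (P : {vspace vec7}) (X : form2) : Prop :=
  in_span (fun Y => exists u v, [/\ u \in P, v \in P & Y = Psi u v]) X.

Definition Pphi (P : {vspace vec7}) (X : form2) : Prop :=
  exists u, u \in P /\ X = contr u.

Definition Theta (P : {vspace vec7}) (X : form2) : Prop :=
  exists A B, [/\ Lambda2 P A, PsiP P B & X = A + B].

End G2.

(** Since [Psi_uv = u ^ v - (u x v) _| phi] and an associative plane [P] is closed
    under [x], [Psi(P)] lies in [Lambda^2(P) + P _| phi].  Conversely every [w] in [P] is
    a product of two vectors of [P]: for [0 <> u] in [P] orthogonal to [w] one has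
    [u x (u x w) = - |u|^2 w], so [w _| phi = u ^ v - Psi_uv] with [v = - u x w / |u|^2].
    For the intersection pick [a <> 0] orthogonal to [P]: every form of [Lambda^2(P)]
    kills [a], whereas [(w _| phi)(-, a) = - w x a] and [|w x a| = |w| |a|].  Finally
    [<u ^ v, (u x v) _| phi> = 2 |u x v|^2 = 2 |u|^2 |v|^2] for orthogonal [u], [v]. *)
From HB Require Import structures.
From mathcomp Require Import all_boot all_order all_algebra.
From mathcomp Require Import reals ring.
Import Order.TTheory GRing.Theory Num.Theory.
Local Open Scope ring_scope.
Set Implicit Arguments. Unset Strict Implicit. Unset Printing Implicit Defensive.

Section Determinant.
Variable R : comPzRingType.

Lemma expand_det_row0 n (A : 'M[R]_n.+1) :
  \det A = \sum_(j < n.+1) (-1) ^+ j * A ord0 j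
             * \det (\matrix_(i < n, k < n) A (lift ord0 i) (lift j k)).
Proof.
rewrite (expand_det_row _ ord0); apply: eq_bigr => j _; rewrite /cofactor add0n.
have -> : row' ord0 (col' j A) = \matrix_(i < n, k < n) A (lift ord0 i) (lift j k).
  by apply/matrixP => a b; rewrite !mxE.
by rewrite mulrCA mulrA.
Qed.

End Determinant.

Section ElementaryForms.
Variable R : realType.
Implicit Types (u v w x y : vec7 R) (i j k l : nat).

Lemma e3E i j k u v w : e3 i j k u v w =
    u 0 (ix i) * (v 0 (ix j) * w 0 (ix k) - v 0 (ix k) * w 0 (ix j))
  - u 0 (ix j) * (v 0 (ix i) * w 0 (ix k) - v 0 (ix k) * w 0 (ix i))
  + u 0 (ix k) * (v 0 (ix i) * w 0 (ix j) - v 0 (ix j) * w 0 (ix i)).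
Proof.
rewrite /e3 expand_det_row0 !big_ord_recl big_ord0.
do 2 rewrite !expand_det_row0 !big_ord_recl !big_ord0.
by rewrite !det_mx00 !mxE /=; ring.
Qed.

Lemma e4E i j k l u v w x : e4 i j k l u v w x =
    u 0 (ix i) * e3 j k l v w x - u 0 (ix j) * e3 i k l v w x
  + u 0 (ix k) * e3 i j l v w x - u 0 (ix l) * e3 i j k v w x.
Proof.
rewrite /e4 expand_det_row0 !big_ord_recl big_ord0 !mxE.
(* The first-row minors are the matrices defining the [e3] terms. *)
rewrite [\det _](_ : _ = e3 j k l v w x).
rewrite [\det _](_ : _ = e3 i k l v w x).
rewrite [\det _](_ : _ = e3 i j l v w x).
rewrite [\det _](_ : _ = e3 i j k v w x) /=; first by ring.
all: rewrite /e3; apply: congr1; apply/matrixP => a b; rewrite !mxE.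
all: by case: a b => [[|[|[|?]]] ?] [[|[|[|?]]] ?].
Qed.

Lemma e3_linear1 i j k (c : R) x y v w :
  e3 i j k (c *: x + y) v w = c * e3 i j k x v w + e3 i j k y v w.
Proof. by rewrite !e3E !mxE; ring. Qed.

Lemma e3_swap23 i j k u v w : e3 i j k u w v = - e3 i j k u v w.
Proof. by rewrite !e3E; ring. Qed.

Lemma e3_cycle i j k u v w : e3 i j k u v w = e3 i j k v w u.
Proof. by rewrite !e3E; ring. Qed.

Lemma e4_swap34 i j k l u v w x : e4 i j k l u v x w = - e4 i j k l u v w x.
Proof. by rewrite !e4E !e3E; ring. Qed.

Lemma e4_eq14 i j k l u v w : e4 i j k l u v w u = 0.
Proof. by rewrite !e4E !e3E; ring. Qed.

End ElementaryForms.

Section AlternatingForms.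
Variable R : realType.
Implicit Types (u v x y a b : vec7 R).

Lemma phi_linear1 (c : R) x y a b : phi (c *: x + y) a b = c * phi x a b + phi y a b.
Proof. by rewrite /phi !e3_linear1; ring. Qed.

Lemma phi_swap23 x a b : phi x b a = - phi x a b.
Proof. by rewrite /phi !(e3_swap23 _ _ _ x a b); ring. Qed.

Lemma phi_cycle x a b : phi x a b = phi a b x.
Proof. by rewrite /phi !(e3_cycle _ _ _ x a b). Qed.

Lemma psi_swap34 u v a b : psi u v b a = - psi u v a b.
Proof. by rewrite /psi !(e4_swap34 _ _ _ _ u v a b); ring. Qed.

Lemma psi_eq14 u v a : psi u v a u = 0.
Proof. by rewrite /psi !e4_eq14 !subrr. Qed.

End AlternatingForms.

Section Coordinates.
Variable R : realType.
Implicit Types (u v x a b : vec7 R).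

Lemma eq_ix m n : (m < 7)%N -> (n < 7)%N -> (ix m.+1 == ix n.+1) = (m == n).
Proof. by move=> hm hn; rewrite -val_eqE /= !inordK. Qed.

Lemma ix_val (i : 'I_7) : ix i.+1 = i.
Proof. exact: inord_val. Qed.

Lemma sum_ord7 (F : 'I_7 -> R) : \sum_(i < 7) F i =
  F (ix 1) + F (ix 2) + F (ix 3) + F (ix 4) + F (ix 5) + F (ix 6) + F (ix 7).
Proof.
rewrite (eq_bigr (fun i : 'I_7 => F (ix i.+1))) => [|i _]; last by rewrite ix_val.
by rewrite !big_ord_recl big_ord0 addr0 !addrA.
Qed.

Lemma ebE k m : eb R k 0 m = (m == k)%:R.
Proof. by rewrite mxE eqxx. Qed.

Lemma dot_eb u k : dot u (eb R k) = u 0 k.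
Proof.
rewrite /dot (bigD1 k) //= ebE eqxx mulr1 big1 ?addr0 // => i /negbTE hik.
by rewrite ebE hik mulr0.
Qed.

Lemma dotE u v : dot u v =
    u 0 (ix 1) * v 0 (ix 1) + u 0 (ix 2) * v 0 (ix 2) + u 0 (ix 3) * v 0 (ix 3)
  + u 0 (ix 4) * v 0 (ix 4) + u 0 (ix 5) * v 0 (ix 5) + u 0 (ix 6) * v 0 (ix 6)
  + u 0 (ix 7) * v 0 (ix 7).
Proof. exact: sum_ord7. Qed.

Lemma cross_coord1 u v : cross u v 0 (ix 1) =
    u 0 (ix 2) * v 0 (ix 3) - u 0 (ix 3) * v 0 (ix 2) + u 0 (ix 4) * v 0 (ix 5)
  - u 0 (ix 5) * v 0 (ix 4) - u 0 (ix 6) * v 0 (ix 7) + u 0 (ix 7) * v 0 (ix 6).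
Proof. by rewrite mxE /phi !e3E !ebE !eq_ix //= ?mulr1n ?mulr0n; ring. Qed.

Lemma cross_coord2 u v : cross u v 0 (ix 2) =
    - u 0 (ix 1) * v 0 (ix 3) + u 0 (ix 3) * v 0 (ix 1) + u 0 (ix 4) * v 0 (ix 6)
  + u 0 (ix 5) * v 0 (ix 7) - u 0 (ix 6) * v 0 (ix 4) - u 0 (ix 7) * v 0 (ix 5).
Proof. by rewrite mxE /phi !e3E !ebE !eq_ix //= ?mulr1n ?mulr0n; ring. Qed.

Lemma cross_coord3 u v : cross u v 0 (ix 3) =
    u 0 (ix 1) * v 0 (ix 2) - u 0 (ix 2) * v 0 (ix 1) + u 0 (ix 4) * v 0 (ix 7)
  - u 0 (ix 5) * v 0 (ix 6) + u 0 (ix 6) * v 0 (ix 5) - u 0 (ix 7) * v 0 (ix 4).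
Proof. by rewrite mxE /phi !e3E !ebE !eq_ix //= ?mulr1n ?mulr0n; ring. Qed.

Lemma cross_coord4 u v : cross u v 0 (ix 4) =
    - u 0 (ix 1) * v 0 (ix 5) - u 0 (ix 2) * v 0 (ix 6) - u 0 (ix 3) * v 0 (ix 7)
  + u 0 (ix 5) * v 0 (ix 1) + u 0 (ix 6) * v 0 (ix 2) + u 0 (ix 7) * v 0 (ix 3).
Proof. by rewrite mxE /phi !e3E !ebE !eq_ix //= ?mulr1n ?mulr0n; ring. Qed.

Lemma cross_coord5 u v : cross u v 0 (ix 5) =
    u 0 (ix 1) * v 0 (ix 4) - u 0 (ix 2) * v 0 (ix 7) + u 0 (ix 3) * v 0 (ix 6)
  - u 0 (ix 4) * v 0 (ix 1) - u 0 (ix 6) * v 0 (ix 3) + u 0 (ix 7) * v 0 (ix 2).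
Proof. by rewrite mxE /phi !e3E !ebE !eq_ix //= ?mulr1n ?mulr0n; ring. Qed.

Lemma cross_coord6 u v : cross u v 0 (ix 6) =
    u 0 (ix 1) * v 0 (ix 7) + u 0 (ix 2) * v 0 (ix 4) - u 0 (ix 3) * v 0 (ix 5)
  - u 0 (ix 4) * v 0 (ix 2) + u 0 (ix 5) * v 0 (ix 3) - u 0 (ix 7) * v 0 (ix 1).
Proof. by rewrite mxE /phi !e3E !ebE !eq_ix //= ?mulr1n ?mulr0n; ring. Qed.

Lemma cross_coord7 u v : cross u v 0 (ix 7) =
    - u 0 (ix 1) * v 0 (ix 6) + u 0 (ix 2) * v 0 (ix 5) + u 0 (ix 3) * v 0 (ix 4)
  - u 0 (ix 4) * v 0 (ix 3) - u 0 (ix 5) * v 0 (ix 2) + u 0 (ix 6) * v 0 (ix 1).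
Proof. by rewrite mxE /phi !e3E !ebE !eq_ix //= ?mulr1n ?mulr0n; ring. Qed.

Let cross_coord := (cross_coord1, cross_coord2, cross_coord3, cross_coord4,
                    cross_coord5, cross_coord6, cross_coord7).

Lemma phi_dot_cross x a b : phi x a b = dot (cross x a) b.
Proof. by rewrite /phi !e3E dotE !cross_coord; ring. Qed.

Lemma phi_cross_psi u v a b :
  phi (cross u v) a b = dot u a * dot v b - dot u b * dot v a - psi u v a b.
Proof. by rewrite /phi /psi !e4E !e3E !dotE !cross_coord; ring. Qed.

End Coordinates.

Section CrossProduct.
Variable R : realType.
Implicit Types (u v x a : vec7 R).

Lemma dotC u v : dot u v = dot v u.
Proof. by apply: eq_bigr => i _; rewrite mulrC. Qed.

Lemma dot_is_linear u : scalar (dot u).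
Proof.
move=> c x y; rewrite /dot mulr_sumr -big_split; apply: eq_bigr => i _ /=.
by rewrite !mxE mulrDr mulrCA.
Qed.

HB.instance Definition _ u := GRing.isLinear.Build R (vec7 R) R *%R (dot u) (dot_is_linear u).

Lemma dot_self_gt0 a : a != 0 -> 0 < dot a a.
Proof.
move=> a_neq0; have sq_ge0 (i : 'I_7) : 0 <= a 0 i * a 0 i by rewrite -expr2 sqr_ge0.
rewrite lt_def sumr_ge0 ?andbT //; apply: contra a_neq0.
move=> /eqP /(psumr_eq0P (fun i _ => sq_ge0 i)) a2_eq0; apply/eqP/rowP => k.
by rewrite mxE; apply/eqP; rewrite -sqrf_eq0 expr2 a2_eq0.
Qed.

Lemma dot_mul_tr u v : u *m v^T = (dot u v)%:M.
Proof.
apply/matrixP => i j; rewrite !ord1 !mxE /=; apply: eq_bigr => k _.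
by rewrite mxE.
Qed.

Lemma cross_cross u x : cross u (cross u x) = dot u x *: u - dot u u *: x.
Proof.
apply/rowP => k; rewrite !mxE phi_cycle phi_cross_psi psi_eq14 subr0 !dot_eb.
by rewrite (dotC x u); ring.
Qed.

Lemma dot_cross_cross u v : dot (cross u v) (cross u v) = dot u u * dot v v - dot u v ^+ 2.
Proof.
rewrite -phi_dot_cross -phi_cycle phi_cross_psi psi_swap34 psi_eq14 oppr0 subr0.
by rewrite (dotC v u) expr2.
Qed.

End CrossProduct.

Section TwoForms.
Variable R : realType.
Implicit Types (u v w b : vec7 R) (Y : form2 R).

Lemma contr_is_linear : linear (@contr R).
Proof. by move=> c x y; apply/matrixP => i j; rewrite !mxE phi_linear1. Qed.

HB.instance Definition _ := GRing.isLinear.Build R (vec7 R) (form2 R) *:%R (@contr R)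
  contr_is_linear.

Lemma wedgeE u v : wedge u v = u^T *m v - v^T *m u.
Proof. by apply/matrixP => i j; rewrite !mxE !big_ord1 !mxE !dot_eb (mulrC (u 0 j)). Qed.

Lemma contr_mul_tr w b : contr w *m b^T = - (cross w b)^T.
Proof.
apply/matrixP => i j; rewrite ord1 !mxE -phi_swap23 phi_dot_cross.
by apply: eq_bigr => k _; rewrite !mxE.
Qed.

Lemma Psi_wedge_contr u v : Psi u v = wedge u v - contr (cross u v).
Proof. by apply/matrixP => i j; rewrite !mxE phi_cross_psi; ring. Qed.

Lemma ip2Bl (X1 X2 : form2 R) Y : ip2 (X1 - X2) Y = ip2 X1 Y - ip2 X2 Y.
Proof.
rewrite /ip2 -sumrB; apply: eq_bigr => i _; rewrite -sumrB.
by apply: eq_bigr => j _; rewrite !mxE mulrBl.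
Qed.

Lemma ip2_outer u v Y : ip2 (u^T *m v) Y = (u *m Y *m v^T) 0 0.
Proof.
rewrite /ip2 mxE; under [RHS]eq_bigr do rewrite mxE mulr_suml.
rewrite [RHS]exchange_big; apply: eq_bigr => i _; apply: eq_bigr => j _.
by rewrite !mxE big_ord1 !mxE mulrAC.
Qed.

Lemma ip2_wedge_contr u v :
  ip2 (wedge u v) (contr (cross u v)) = dot (cross u v) (cross u v) *+ 2.
Proof.
rewrite wedgeE ip2Bl !ip2_outer -!mulmxA !contr_mul_tr !mulmxN !dot_mul_tr !mxE /=.
rewrite !mulr1n (dotC u) (dotC v) -!phi_dot_cross (phi_swap23 _ u v) opprK.
by rewrite (phi_cycle (cross u v)) mulr2n.
Qed.

End TwoForms.

Section SumsOfSubspaces.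
Variables (K : pzRingType) (V : lmodType K).
Implicit Types (S T U : V -> Prop) (X Y : V).

Definition lin_closed S := S 0 /\ forall c X Y, S X -> S Y -> S (c *: X + Y).

Definition sum_pred S T X := exists A B, [/\ S A, T B & X = A + B].

Lemma lin_closedD S X Y : lin_closed S -> S X -> S Y -> S (X + Y).
Proof. by case=> _ S_lin SX SY; rewrite -[X]scale1r; apply: S_lin. Qed.

Lemma lin_closedZ S c X : lin_closed S -> S X -> S (c *: X).
Proof. by case=> S0 S_lin SX; rewrite -[c *: X]addr0; apply: S_lin. Qed.

Lemma sum_pred_lin_closed S T :
  lin_closed S -> lin_closed T -> lin_closed (sum_pred S T).
Proof.
move=> [S0 S_lin] [T0 T_lin]; split; first by exists 0, 0; rewrite addr0.
move=> c _ _ [A1 [B1 [SA1 TB1 ->]]] [A2 [B2 [SA2 TB2 ->]]].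
exists (c *: A1 + A2), (c *: B1 + B2); split; [exact: S_lin | exact: T_lin |].
by rewrite scalerDr addrACA.
Qed.

Lemma sum_pred_absorb S T U : lin_closed S ->
  (forall X, T X -> sum_pred S U X) -> forall X, sum_pred S T X -> sum_pred S U X.
Proof.
move=> S_lin TSU _ [A [B [SA /TSU [A' [C [SA' UC ->]]] ->]]].
by exists (A + A'), C; split => //; [exact: lin_closedD | rewrite addrA].
Qed.

End SumsOfSubspaces.

Section Span.
Variable R : realType.
Implicit Types (G S : form2 R -> Prop) (X : form2 R).

Lemma in_span_gen G X : G X -> in_span G X.
Proof. by exists 1%N, (fun=> 1), (fun=> X); rewrite big_ord1 scale1r. Qed.

Lemma in_span_lin_closed G : lin_closed (in_span G).
Proof.
split; first by exists 0%N, (fun=> 0), (fun=> 0); split => [[]|]; rewrite ?big_ord0.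
move=> c _ _ [n1 [c1 [g1 [G_g1 ->]]]] [n2 [c2 [g2 [G_g2 ->]]]].
exists (n1 + n2)%N, (fun i => match split i with inl j => c * c1 j | inr j => c2 j end),
  (fun i => match split i with inl j => g1 j | inr j => g2 j end).
split=> [i|]; first by case: (split i).
rewrite big_split_ord scaler_sumr; congr (_ + _); apply: eq_bigr => i _.
  by rewrite (unsplitK (inl _ i)) scalerA.
by rewrite (unsplitK (inr _ i)).
Qed.

Lemma in_span_min G S : lin_closed S -> (forall X, G X -> S X) ->
  forall X, in_span G X -> S X.
Proof.
move=> [S0 S_lin] GS _ [n [c [g [G_g ->]]]].
by elim/big_rec: _ => // i Y _ SY; apply: S_lin SY; apply: GS.
Qed.

End Span.

Section LeftKernel.
Variable F : fieldType.

Lemma left_kernel_nonzero m n (M : 'M[F]_(m, n)) :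
  (n < m)%N -> exists2 c : 'rV_m, c != 0 & c *m M = 0.
Proof.
move=> n_lt_m; have : kermx M != 0.
  rewrite -mxrank_eq0 mxrank_ker subn_eq0 -ltnNge.
  exact: leq_ltn_trans (rank_leq_col M) n_lt_m.
by case/rowV0Pn => c /sub_kermxP cM c_neq0; exists c.
Qed.

End LeftKernel.

Section Orthogonality.
Variable R : realType.
Implicit Types (P : {vspace vec7 R}) (w : vec7 R).

Lemma exists_orthogonal_in P w :
  (1 < \dim P)%N -> exists u, [/\ u \in P, u != 0 & dot w u = 0].
Proof.
move=> dimP; set b := vbasis P.
have [c c_neq0 cM] := left_kernel_nonzero (\matrix_(i < \dim P, j < 1) dot w b`_i) dimP.
exists (\sum_i c 0 i *: b`_i); split.
- by apply: rpred_sum => i _; rewrite memvZ // vbasis_mem // mem_nth ?size_tuple.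
- apply: contra c_neq0 => /eqP sum_eq0; apply/eqP/rowP => i; rewrite mxE.
  by move/freeP: (basis_free (vbasisP P)) => /(_ (c 0) sum_eq0 i).
- rewrite linear_sum; transitivity ((c *m \matrix_(i < \dim P, j < 1) dot w b`_i) 0 0).
    by rewrite mxE; apply: eq_bigr => i _; rewrite linearZ mxE.
  by rewrite cM mxE.
Qed.

Lemma exists_orthogonal_to P :
  (\dim P < 7)%N -> exists2 a, a != 0 & forall x, x \in P -> dot a x = 0.
Proof.
move=> dimP; set b := vbasis P.
have [a a_neq0 aM] := left_kernel_nonzero (\matrix_(k < 7, i < \dim P) b`_i 0 k) dimP.
exists a => // x /coord_vbasis ->; rewrite linear_sum big1 // => i _.
rewrite linearZ /= [dot a _](_ : _ = (a *m \matrix_(k, i) b`_i 0 k) 0 i).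
  by rewrite aM mxE mulr0.
by rewrite mxE; apply: eq_bigr => k _; rewrite mxE.
Qed.

End Orthogonality.

Section AssociativePlane.
Variables (R : realType) (P : {vspace vec7 R}).
Hypothesis P_cross_closed : forall u v, u \in P -> v \in P -> cross u v \in P.
Implicit Types (w a : vec7 R) (X : form2 R).

Lemma Pphi_lin_closed : lin_closed (Pphi P).
Proof.
split; first by exists 0; rewrite mem0v linear0.
move=> c _ _ [u [Pu ->]] [v [Pv ->]].
by exists (c *: u + v); rewrite memvD ?memvZ // linearP.
Qed.

Lemma PsiP_sub X : PsiP P X -> sum_pred (Lambda2 P) (Pphi P) X.
Proof.
apply: in_span_min; first exact: sum_pred_lin_closed (in_span_lin_closed _) Pphi_lin_closed.
move=> _ [u [v [Pu Pv ->]]]; exists (wedge u v), (contr (- cross u v)); split.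
- by apply: in_span_gen; exists u, v.
- by exists (- cross u v); rewrite memvN P_cross_closed.
- by rewrite Psi_wedge_contr linearN.
Qed.

Lemma cross_onto w : (1 < \dim P)%N -> w \in P ->
  exists u v, [/\ u \in P, v \in P & cross u v = w].
Proof.
move=> dimP Pw; have [u [Pu u_neq0 wu]] := exists_orthogonal_in w dimP.
have uu_neq0 : dot u u != 0 by rewrite gt_eqF // dot_self_gt0.
exists u, (cross u ((- (dot u u)^-1) *: w)); split; rewrite ?P_cross_closed ?memvZ //.
rewrite cross_cross linearZ /= dotC wu mulr0 scale0r sub0r scalerA.
by rewrite mulrN mulfV // scaleN1r opprK.
Qed.

Lemma Pphi_sub : (1 < \dim P)%N ->
  forall X, Pphi P X -> sum_pred (Lambda2 P) (PsiP P) X.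
Proof.
move=> dimP _ [w [Pw ->]]; have [u [v [Pu Pv <-]]] := cross_onto dimP Pw.
exists (wedge u v), ((-1) *: Psi u v); split.
- by apply: in_span_gen; exists u, v.
- apply: lin_closedZ; first exact: in_span_lin_closed.
  by apply: in_span_gen; exists u, v.
- by rewrite Psi_wedge_contr scaleN1r opprB addrC subrK.
Qed.

Lemma Lambda2_mul_tr a X : (forall x, x \in P -> dot a x = 0) ->
  Lambda2 P X -> X *m a^T = 0.
Proof.
move=> aP; apply: (in_span_min (S := fun Y => Y *m a^T = 0)) => [|_ [u [v [Pu Pv ->]]]].
  split=> [|c X1 X2 X1a X2a]; first exact: mul0mx.
  by rewrite mulmxDl -scalemxAl X1a X2a scaler0 addr0.
rewrite wedgeE mulmxBl -!mulmxA !dot_mul_tr (dotC u) (dotC v) !aP //.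
by rewrite !mul_mx_scalar !scale0r subrr.
Qed.

Lemma Lambda2_Pphi_eq0 X : (\dim P < 7)%N -> Lambda2 P X -> Pphi P X -> X = 0.
Proof.
move=> dimP L2X [w [Pw X_eq]]; have [a a_neq0 aP] := exists_orthogonal_to dimP.
have wa0 : cross w a = 0.
  apply: trmx_inj; rewrite trmx0 -[_^T]opprK -contr_mul_tr -X_eq.
  by rewrite (Lambda2_mul_tr aP L2X) oppr0.
have [w0|w_neq0] := eqVneq w 0; first by rewrite X_eq w0 linear0.
have := dot_cross_cross w a; rewrite wa0 linear0 (dotC w a) (aP w Pw) expr2 mulr0 subr0.
by move=> /esym/eqP; rewrite mulf_eq0 !gt_eqF ?dot_self_gt0.
Qed.

Lemma Lambda2_Pphi_not_orthogonal : (1 < \dim P)%N ->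
  exists A B, [/\ Lambda2 P A, Pphi P B & ip2 A B != 0].
Proof.
move=> dimP; set u := vpick P.
have u_neq0 : u != 0 by rewrite vpick0 -dimv_eq0 -lt0n ltnW.
have [v [Pv v_neq0 uv]] := exists_orthogonal_in u dimP.
exists (wedge u v), (contr (cross u v)); split.
- by apply: in_span_gen; exists u, v; rewrite memv_pick.
- by exists (cross u v); rewrite P_cross_closed ?memv_pick.
rewrite ip2_wedge_contr dot_cross_cross uv expr2 mulr0 subr0 mulrn_eq0 /=.
by rewrite mulf_eq0 !gt_eqF ?dot_self_gt0.
Qed.

End AssociativePlane.

Theorem corollary4p11 (R : realType) (P : {vspace vec7 R}) :
  is_associative P ->
  [/\ (* Theta(P) = Lambda^2(P) + (P _| phi) *)
      (forall X : form2 R,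
         Theta P X <-> exists A B, [/\ Lambda2 P A, Pphi P B & X = A + B]),
      (* Lambda^2(P) /\ (P _| phi) = {0} *)
      (forall X : form2 R, Lambda2 P X -> Pphi P X -> X = 0)
    & (* the direct sum is not orthogonal *)
      (exists A B : form2 R, [/\ Lambda2 P A, Pphi P B & ip2 A B != 0])].
Proof.
move=> [dimP P_cross_closed].
have dimP_gt1 : (1 < \dim P)%N by rewrite dimP.
have dimP_lt7 : (\dim P < 7)%N by rewrite dimP.
split=> [X|X|]; first split.
- exact: (sum_pred_absorb (in_span_lin_closed _) (PsiP_sub P_cross_closed)).
- exact: (sum_pred_absorb (in_span_lin_closed _) (Pphi_sub P_cross_closed dimP_gt1)).
- exact: Lambda2_Pphi_eq0 dimP_lt7.
- exact: Lambda2_Pphi_not_orthogonal P_cross_closed dimP_gt1.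
Qed.
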